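(* For every real $a>0$: (i) for every complex $s$ with $\Re(s)>2$, \[\sum_{k=1}^\infty \zeta(s,ka)=a^{-s}\sum_{n=0}^\infty \zeta\Big(s,\frac{n}{a}+1\Big);\] (ii) for every complex $s$ with $\Re(s)>1$, \[\sum_{k=1}^\infty (-1)^{k-1} \zeta(s,ka)=(2a)^{-s}\sum_{n=0}^\infty\Big\{\zeta\Big(s,\frac{n}{2a}+\frac{1}{2}\Big)-\zeta\Big(s,\frac{n}{2a}+1\Big)\Big\}.\]
   Context: $\zeta(s,\alpha)=\sum_{n=0}^\infty (n+\alpha)^{-s}$ denotes the Hurwitz zeta function ($\Re(s)>1$, $\alpha>0$). *)

From Stdlib Require Import Reals.
From Coquelicot Require Import Coquelicot.
Open Scope R_scope.

(* Complex power x^z for a real base x > 0: x^z := exp(z ln x), written out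
   as exp(Re z ln x) (cos(Im z ln x) + i sin(Im z ln x)). *)
Definition cpow_pos (x : R) (z : C) : C :=
  (exp (Re z * ln x) * cos (Im z * ln x),
   exp (Re z * ln x) * sin (Im z * ln x)).

Definition hurwitz_zeta (s : C) (alpha : R) : C :=
  (Series (fun n => Re (cpow_pos (INR n + alpha) (Copp s))),
   Series (fun n => Im (cpow_pos (INR n + alpha) (Copp s)))).

From Stdlib Require Import Reals Lra Lia.
From Coquelicot Require Import Coquelicot.
Open Scope R_scope.

(* (i)  sum_(k>=1) zeta(s, k a) is the double series sum_(k>=1) sum_(n>=0)
        (n + k a)^-s.  For Re s > 2 it is absolutely summable, so the order of
        summation may be exchanged; since n + k a = a (k - 1 + n/a + 1), the
        column indexed by n sums to a^-s zeta(s, n/a + 1).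
   (ii) For Re s > 1 we group the alternating series in consecutive pairs
        (legitimate because zeta(s, k a) -> 0) and obtain the double series of
        (n + (2j+1) a)^-s - (n + (2j+2) a)^-s.  By the mean value theorem these
        differences are O((n + (j+1) a)^-(Re s + 1)), hence absolutely
        summable; exchanging the order of summation, the column indexed by n
        sums to (2a)^-s (zeta(s, n/(2a) + 1/2) - zeta(s, n/(2a) + 1)). *)

Lemma ex_series_Rabs_le (a b : nat -> R) :
  (forall n, Rabs (a n) <= b n) -> ex_series b -> ex_series a.
Proof. intros Hab Hb; exact (ex_series_le a b Hab Hb). Qed.

Lemma sum_n_nonneg_mono (a : nat -> R) (N m : nat) :
  (forall n, 0 <= a n) -> (N <= m)%nat -> sum_n a N <= sum_n a m.
Proof.
  intros Ha Hm; induction Hm as [|m _ IH]; [lra|].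
  rewrite sum_Sn; change (plus (sum_n a m) (a (S m))) with (sum_n a m + a (S m)).
  specialize (Ha (S m)); lra.
Qed.

Lemma term_le_sum_n (a : nat -> R) (N : nat) :
  (forall n, 0 <= a n) -> a N <= sum_n a N.
Proof.
  intros Ha; destruct N as [|N]; [rewrite sum_O; lra|].
  rewrite sum_Sn; change (plus (sum_n a N) (a (S N))) with (sum_n a N + a (S N)).
  assert (0 <= sum_n a N).
  { apply Rle_trans with (sum_n a 0); [rewrite sum_O; auto|].
    apply sum_n_nonneg_mono; auto; lia. }
  lra.
Qed.

Lemma sum_n_le_series (a : nat -> R) (l : R) (N : nat) :
  (forall n, 0 <= a n) -> is_series a l -> sum_n a N <= l.
Proof.
  intros Ha Hl.
  change (Rbar_le (sum_n a N) l).
  apply (is_lim_seq_le_loc (fun _ => sum_n a N) (sum_n a)); [|apply is_lim_seq_const|exact Hl].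
  exists N; intros m Hm; apply sum_n_nonneg_mono; auto.
Qed.

Lemma bounded_nonneg_series (a : nat -> R) (B : R) :
  (forall n, 0 <= a n) -> (forall N, sum_n a N <= B) ->
  exists l, is_series a l /\ l <= B.
Proof.
  intros Ha HB.
  destruct (ex_finite_lim_seq_incr (sum_n a) B) as [l Hl]; [|exact HB|].
  { intros n; rewrite sum_Sn.
    change (plus (sum_n a n) (a (S n))) with (sum_n a n + a (S n)).
    specialize (Ha (S n)); lra. }
  exists l; split; [exact Hl|].
  change (Rbar_le l B).
  apply (is_lim_seq_le (sum_n a) (fun _ => B)); [exact HB|exact Hl|apply is_lim_seq_const].
Qed.

Lemma is_series_sum_n (a : nat -> nat -> R) (c : nat -> R) (J : nat) :
  (forall j, is_series (fun i => a i j) (c j)) ->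
  is_series (fun i => sum_n (a i) J) (sum_n c J).
Proof.
  intros Hc; induction J as [|J IH].
  - rewrite sum_O; apply (is_series_ext (fun i => a i 0%nat)); [|apply Hc].
    intros i; rewrite sum_O; reflexivity.
  - rewrite sum_Sn; apply (is_series_ext (fun i => plus (sum_n (a i) J) (a i (S J)))).
    + intros i; rewrite sum_Sn; reflexivity.
    + exact (is_series_plus _ _ _ _ IH (Hc (S J))).
Qed.

Lemma nonneg_columns_le (a : nat -> nat -> R) (r c : nat -> R) (L : R) :
  (forall i j, 0 <= a i j) ->
  (forall i, is_series (a i) (r i)) -> is_series r L ->
  (forall j, is_series (fun i => a i j) (c j)) ->
  exists L', is_series c L' /\ L' <= L.
Proof.
  intros Ha Hr HL Hc.
  apply bounded_nonneg_series.
  - intros j; apply Rle_trans with (sum_n (fun i => a i j) 0).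
    + rewrite sum_O; auto.
    + apply sum_n_le_series; auto.
  - intros J.
    rewrite <- (is_series_unique _ _ (is_series_sum_n a c J Hc)), <- (is_series_unique _ _ HL).
    apply Series_le; [|exists L; exact HL].
    intros i; split.
    + apply Rle_trans with (sum_n (a i) 0); [rewrite sum_O; auto|].
      apply sum_n_nonneg_mono; auto; lia.
    + apply sum_n_le_series; auto.
Qed.

Lemma nonneg_fubini (a : nat -> nat -> R) (r : nat -> R) (L : R) :
  (forall i j, 0 <= a i j) ->
  (forall i, is_series (a i) (r i)) -> is_series r L ->
  exists c : nat -> R, (forall j, is_series (fun i => a i j) (c j)) /\ is_series c L.
Proof.
  intros Ha Hr HL.
  assert (Hcol : forall j, ex_series (fun i => a i j)).
  { intros j; apply (ex_series_Rabs_le _ r); [|exists L; exact HL].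
    intros i; rewrite Rabs_pos_eq by auto; apply Rle_trans with (sum_n (a i) j).
    - apply term_le_sum_n; auto.
    - apply sum_n_le_series; auto. }
  exists (fun j => Series (fun i => a i j)).
  assert (Hc : forall j, is_series (fun i => a i j) (Series (fun i => a i j)))
    by (intros j; apply Series_correct, Hcol).
  split; [exact Hc|].
  destruct (nonneg_columns_le a r _ L Ha Hr HL Hc) as [L' [HL' Hle]].
  destruct (nonneg_columns_le (fun j i => a i j) _ r L' (fun j i => Ha i j) Hc HL' Hr)
    as [L'' [HL'' Hge]].
  assert (L'' = L) by (rewrite <- (is_series_unique _ _ HL''); exact (is_series_unique _ _ HL)).
  replace L with L' by lra; exact HL'.
Qed.

Lemma is_series_Rabs_le (u M : nat -> R) (l : R) :
  (forall n, Rabs (u n) <= M n) -> ex_series M -> is_series u l -> Rabs l <= Series M.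
Proof.
  intros HuM HM Hu; rewrite <- (is_series_unique _ _ Hu).
  assert (Habs : ex_series (fun n => Rabs (u n)))
    by (apply (ex_series_Rabs_le _ M); [intros n; rewrite Rabs_Rabsolu|]; auto).
  apply Rle_trans with (Series (fun n => Rabs (u n))); [apply Series_Rabs, Habs|].
  apply Series_le; [|exact HM]; intros n; split; [apply Rabs_pos|auto].
Qed.

(* Reduced to Tonelli via u = (u + M) - M. *)
Lemma dominated_fubini (u M : nat -> nat -> R) (r c : nat -> R) :
  (forall i j, Rabs (u i j) <= M i j) ->
  (forall i, ex_series (M i)) -> ex_series (fun i => Series (M i)) ->
  (forall i, is_series (u i) (r i)) -> (forall j, is_series (fun i => u i j) (c j)) ->
  exists L, is_series r L /\ is_series c L.
Proof.
  intros HuM HM HMM Hr Hc.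
  assert (HM0 : forall i j, 0 <= M i j)
    by (intros i j; apply Rle_trans with (Rabs (u i j)); [apply Rabs_pos|auto]).
  assert (Hrs : is_series r (Series r)).
  { apply Series_correct, (ex_series_Rabs_le _ (fun i => Series (M i))); [|exact HMM].
    intros i; apply (is_series_Rabs_le (u i)); auto. }
  destruct (nonneg_fubini M _ _ HM0 (fun i => Series_correct _ (HM i)) (Series_correct _ HMM))
    as [cM [HcM HLM]].
  destruct (nonneg_fubini (fun i j => u i j + M i j) (fun i => r i + Series (M i))
              (Series r + Series (fun i => Series (M i))))
    as [cuM [HcuM HLuM]].
  - intros i j; specialize (HuM i j); apply Rabs_le_between in HuM; lra.
  - intros i; exact (is_series_plus _ _ _ _ (Hr i) (Series_correct _ (HM i))).
  - exact (is_series_plus _ _ _ _ Hrs (Series_correct _ HMM)).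
  - assert (Hcol : forall j, c j = cuM j - cM j).
    { intros j; rewrite <- (is_series_unique _ _ (Hc j)).
      apply is_series_unique.
      apply (is_series_ext (fun i => plus (u i j + M i j) (opp (M i j)))).
      + intros i; unfold plus, opp; simpl; ring.
      + exact (is_series_minus _ _ _ _ (HcuM j) (HcM j)). }
    exists (Series r); split; [exact Hrs|].
    apply (is_series_ext (fun j => plus (cuM j) (opp (cM j)))).
    + intros j; rewrite Hcol; reflexivity.
    + replace (Series r) with (plus (Series r + Series (fun i => Series (M i)))
                                    (opp (Series (fun i => Series (M i)))))
        by (unfold plus, opp; simpl; ring).
      exact (is_series_minus _ _ _ _ HLuM HLM).
Qed.

Lemma sum_n_C (a : nat -> C) (N : nat) :
  sum_n a N = (sum_n (fun n => Re (a n)) N, sum_n (fun n => Im (a n)) N).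
Proof.
  induction N as [|N IH]; [rewrite !sum_O; destruct (a 0%nat); reflexivity|].
  rewrite !sum_Sn, IH; reflexivity.
Qed.

(* A complex series converges iff its real and imaginary parts do, since
   balls of C are products of balls of R. *)
Lemma is_series_C (a : nat -> C) (l : C) :
  is_series a l <->
  is_series (fun n => Re (a n)) (Re l) /\ is_series (fun n => Im (a n)) (Im l).
Proof.
  unfold is_series; split.
  - intros H; pose proof (proj1 (filterlim_locally _ _) H) as Hball.
    split; apply filterlim_locally; intros eps; generalize (Hball eps); apply filter_imp;
      intros n Hn; rewrite sum_n_C in Hn; apply Hn.
  - intros [H1 H2]; apply filterlim_locally; intros eps.
    generalize (filter_and _ _ (proj1 (filterlim_locally _ _) H1 eps)
                               (proj1 (filterlim_locally _ _) H2 eps)).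
    apply filter_imp; intros n Hn; rewrite sum_n_C; exact Hn.
Qed.

Lemma dominated_fubini_C (u : nat -> nat -> C) (M : nat -> nat -> R) (r c : nat -> C) :
  (forall i j, Rabs (Re (u i j)) <= M i j /\ Rabs (Im (u i j)) <= M i j) ->
  (forall i, ex_series (M i)) -> ex_series (fun i => Series (M i)) ->
  (forall i, is_series (u i) (r i)) -> (forall j, is_series (fun i => u i j) (c j)) ->
  exists L, is_series r L /\ is_series c L.
Proof.
  intros HuM HM HMM Hr Hc.
  destruct (dominated_fubini (fun i j => Re (u i j)) M (fun i => Re (r i)) (fun j => Re (c j)))
    as [L1 [Hr1 Hc1]]; auto;
    [intros i j; apply HuM| intros i; apply is_series_C, Hr| intros j; apply is_series_C, Hc|].
  destruct (dominated_fubini (fun i j => Im (u i j)) M (fun i => Im (r i)) (fun j => Im (c j)))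
    as [L2 [Hr2 Hc2]]; auto;
    [intros i j; apply HuM| intros i; apply is_series_C, Hr| intros j; apply is_series_C, Hc|].
  exists (L1, L2); split; apply is_series_C; split; assumption.
Qed.

Lemma is_series_Cmult_cancel (A B : C) (z : nat -> C) (L : C) :
  Cmult B A = 1 -> is_series (fun n => Cmult A (z n)) L ->
  is_series z (Cmult B L) /\ L = Cmult A (Cmult B L).
Proof.
  intros HBA HL; split.
  - apply (is_series_ext (fun n => scal B (Cmult A (z n)))).
    + intros n; change (Cmult B (Cmult A (z n)) = z n).
      rewrite Cmult_assoc, HBA; apply Cmult_1_l.
    + exact (is_series_scal B _ _ HL).
  - rewrite Cmult_assoc, (Cmult_comm A B), HBA; symmetry; apply Cmult_1_l.
Qed.

Lemma Rpower_pos (x y : R) : 0 < Rpower x y.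
Proof. apply exp_pos. Qed.

Lemma Rpower_base_1 (y : R) : Rpower 1 y = 1.
Proof. unfold Rpower; rewrite ln_1, Rmult_0_r; apply exp_0. Qed.

Lemma Rpower_opp_antitone (t x y : R) :
  0 <= t -> 0 < x <= y -> Rpower y (- t) <= Rpower x (- t).
Proof.
  intros Ht Hxy; rewrite !Rpower_Ropp.
  apply Rinv_le_contravar; [apply Rpower_pos|apply Rle_Rpower_l; auto].
Qed.

(* Since m a >= min(a,1) m and x >= min(a,1) x, the decay of (x + m a)^-t is
   controlled by that of (x + m)^-t, uniformly in x and m. *)
Lemma Rpower_scale_le (t a x m : R) : 0 <= t -> 0 < a -> 0 <= x -> 0 < m ->
  Rpower (x + m * a) (- t) <= Rpower (Rmin a 1) (- t) * Rpower (x + m) (- t).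
Proof.
  intros Ht Ha Hx Hm.
  assert (Hb : 0 < Rmin a 1) by (apply Rmin_glb_lt; lra).
  pose proof (Rmin_l a 1); pose proof (Rmin_r a 1).
  rewrite Rpower_mult_distr by lra; apply Rpower_opp_antitone; [auto|nra].
Qed.

(* Since (x + y + 1)^2 >= (x + 1)(y + 1), the power (x + y + 1)^-t splits
   into a product of half powers. *)
Lemma Rpower_sum_split (t x y : R) : 0 <= t -> 0 <= x -> 0 <= y ->
  Rpower (x + y + 1) (- t) <= Rpower (x + 1) (- (t / 2)) * Rpower (y + 1) (- (t / 2)).
Proof.
  intros Ht Hx Hy.
  replace (- t) with (INR 2 * - (t / 2)) by (simpl; field).
  rewrite <- Rpower_mult, Rpower_pow, Rpower_mult_distr by lra.
  apply Rpower_opp_antitone; [lra|split; nra].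
Qed.

Lemma mvt_upper (f df : R -> R) (x y K : R) : x < y ->
  (forall c, x <= c <= y -> is_derive f c (df c)) ->
  (forall c, x <= c <= y -> df c <= K) ->
  f y - f x <= K * (y - x).
Proof.
  intros Hxy Hd HK.
  destruct (MVT_cor2 f df x y Hxy) as [c [Heq Hc]];
    [intros c Hc; apply is_derive_Reals, Hd, Hc|].
  rewrite Heq; apply Rmult_le_compat_r; [lra|apply HK; lra].
Qed.

(* Convergence of the p-series sum (n+1)^-r for r > 1, by telescoping
   against (n+1)^(1-r):  (r-1) (n+2)^-r <= (n+1)^(1-r) - (n+2)^(1-r). *)
Lemma ex_series_Rpower (r : R) : 1 < r -> ex_series (fun n => Rpower (INR n + 1) (- r)).
Proof.
  intros Hr; set (g := fun n : nat => Rpower (INR n + 1) (1 - r)).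
  assert (Hstep : forall n, (r - 1) * Rpower (INR (S n) + 1) (- r) <= g n - g (S n)).
  { intros n; unfold g; rewrite S_INR; pose proof (pos_INR n).
    assert (Hmvt := mvt_upper (fun z => Rpower z (1 - r)) (fun z => (1 - r) * Rpower z (1 - r - 1))
                   (INR n + 1) (INR n + 1 + 1) ((1 - r) * Rpower (INR n + 1 + 1) (- r))).
    cbv beta in Hmvt.
    enough (Rpower (INR n + 1 + 1) (1 - r) - Rpower (INR n + 1) (1 - r)
              <= (1 - r) * Rpower (INR n + 1 + 1) (- r) * (INR n + 1 + 1 - (INR n + 1))) by lra.
    apply Hmvt; [lra|intros c Hc; apply is_derive_Reals, derivable_pt_lim_power; lra|].
    intros c Hc; replace (1 - r - 1) with (- r) by ring.
    apply Rmult_le_compat_neg_l; [lra|apply Rpower_opp_antitone; lra]. }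
  assert (Hsum : forall N, (r - 1) * sum_n (fun n => Rpower (INR n + 1) (- r)) N <= r - g N).
  { induction N as [|N IH].
    - rewrite sum_O; unfold g; simpl; rewrite Rplus_0_l, !Rpower_base_1; lra.
    - rewrite sum_Sn; change (plus ?x ?y) with (x + y); specialize (Hstep N); lra. }
  destruct (bounded_nonneg_series (fun n => Rpower (INR n + 1) (- r)) (r * / (r - 1)))
    as [l [Hl _]]; [intros n; apply Rlt_le, Rpower_pos| |exists l; exact Hl].
  intros N; specialize (Hsum N); pose proof (Rpower_pos (INR N + 1) (1 - r)).
  assert (Hinv : (r - 1) * / (r - 1) = 1) by (field; lra).
  assert (0 < / (r - 1)) by (apply Rinv_0_lt_compat; lra).
  unfold g in Hsum; nra.
Qed.

Lemma ex_series_Rpower_shift (r al : R) : 1 < r -> 0 < al ->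
  ex_series (fun n => Rpower (INR n + al) (- r)).
Proof.
  intros Hr Hal.
  apply (ex_series_Rabs_le _ (fun n => Rpower (Rmin al 1) (- r) * Rpower (INR n + 1) (- r))).
  - intros n; rewrite Rabs_pos_eq by apply Rlt_le, Rpower_pos.
    replace (INR n + al) with (INR n + 1 * al) by ring.
    apply Rpower_scale_le; [lra|lra|apply pos_INR|lra].
  - exact (ex_series_scal _ _ (ex_series_Rpower _ Hr)).
Qed.

(* For t > 2 the double series sum_{k,n} (n + (k+1) a)^-t converges: its
   terms are at most min(a,1)^-t (n+1)^(-t/2) (k+1)^(-t/2). *)
Lemma ex_double_series_Rpower (t a : R) : 2 < t -> 0 < a ->
  (forall k, ex_series (fun n => Rpower (INR n + INR (S k) * a) (- t))) /\
  ex_series (fun k => Series (fun n => Rpower (INR n + INR (S k) * a) (- t))).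
Proof.
  intros Ht Ha.
  set (kappa := Rpower (Rmin a 1) (- t)); set (v := fun n : nat => Rpower (INR n + 1) (- (t / 2))).
  assert (Hv : ex_series v) by (apply ex_series_Rpower; lra).
  assert (Hterm : forall k n, 0 <= Rpower (INR n + INR (S k) * a) (- t) <= (kappa * v k) * v n).
  { intros k n; split; [apply Rlt_le, Rpower_pos|].
    pose proof (pos_INR n); pose proof (pos_INR k); pose proof (Rpower_pos (Rmin a 1) (- t)).
    eapply Rle_trans; [apply Rpower_scale_le; [lra|lra|lra|apply lt_0_INR; lia]|].
    rewrite S_INR, <- Rplus_assoc; unfold kappa, v.
    rewrite Rmult_assoc; apply Rmult_le_compat_l; [lra|].
    rewrite Rmult_comm; apply Rpower_sum_split; lra. }
  assert (Hrow : forall k, ex_series (fun n => Rpower (INR n + INR (S k) * a) (- t))).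
  { intros k; apply (ex_series_Rabs_le _ (fun n => (kappa * v k) * v n)); [|exact (ex_series_scal _ _ Hv)].
    intros n; rewrite Rabs_pos_eq; apply Hterm. }
  split; [exact Hrow|].
  apply (ex_series_Rabs_le _ (fun k => (kappa * Series v) * v k)); [|exact (ex_series_scal _ _ Hv)].
  intros k; rewrite Rabs_pos_eq.
  - apply Rle_trans with (Series (fun n => (kappa * v k) * v n));
      [apply Series_le; [apply Hterm|exact (ex_series_scal _ _ Hv)]|].
    rewrite Series_scal_l; right; ring.
  - apply Rle_trans with (sum_n (fun n => Rpower (INR n + INR (S k) * a) (- t)) 0);
      [rewrite sum_O; apply Hterm|].
    apply sum_n_le_series; [apply Hterm|apply Series_correct, Hrow].
Qed.

Lemma cpow_pos_mult (x y : R) (z : C) : 0 < x -> 0 < y ->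
  Cmult (cpow_pos x z) (cpow_pos y z) = cpow_pos (x * y) z.
Proof.
  intros Hx Hy; unfold cpow_pos; rewrite ln_mult by auto.
  apply injective_projections; simpl; rewrite !Rmult_plus_distr_l, exp_plus;
    [rewrite cos_plus|rewrite sin_plus]; ring.
Qed.

Lemma cpow_pos_plus (x : R) (z w : C) :
  Cmult (cpow_pos x z) (cpow_pos x w) = cpow_pos x (Cplus z w).
Proof.
  unfold cpow_pos, Re, Im; apply injective_projections; simpl; rewrite !Rmult_plus_distr_r, exp_plus;
    [rewrite cos_plus|rewrite sin_plus]; ring.
Qed.

Lemma cpow_pos_opp (x : R) (z : C) : Cmult (cpow_pos x z) (cpow_pos x (Copp z)) = 1.
Proof.
  rewrite cpow_pos_plus, Cplus_opp_r; unfold cpow_pos; simpl.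
  rewrite !Rmult_0_l, exp_0, cos_0, sin_0, Rmult_0_r, Rmult_1_r; reflexivity.
Qed.

Lemma cpow_pos_bound (x : R) (s : C) :
  Rabs (Re (cpow_pos x (Copp s))) <= Rpower x (- Re s) /\
  Rabs (Im (cpow_pos x (Copp s))) <= Rpower x (- Re s).
Proof.
  unfold cpow_pos, Rpower, Re, Im; simpl; rewrite !Rabs_mult, Rabs_pos_eq by apply Rlt_le, exp_pos.
  pose proof (exp_pos (- fst s * ln x)).
  pose proof (Rabs_le _ 1 (COS_bound (- snd s * ln x))) as Hcos.
  pose proof (Rabs_le _ 1 (SIN_bound (- snd s * ln x))) as Hsin.
  split; (apply Rle_trans with (exp (- fst s * ln x) * 1); [apply Rmult_le_compat_l|]; lra).
Qed.

Lemma trig_combination_bound (A B u : R) :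
  Rabs (A * cos u - B * sin u) <= Rabs A + Rabs B.
Proof.
  unfold Rminus; eapply Rle_trans; [apply Rabs_triang|].
  rewrite Rabs_Ropp, !Rabs_mult.
  pose proof (Rabs_le _ 1 (COS_bound u)); pose proof (Rabs_le _ 1 (SIN_bound u)).
  pose proof (Rabs_pos A); pose proof (Rabs_pos B).
  apply Rplus_le_compat; rewrite <- (Rmult_1_r (Rabs _)) at 2; apply Rmult_le_compat_l; lra.
Qed.

(* Mean value estimate for the oscillating power y^A cos(B ln y + phi), whose
   derivative is y^(A-1) (A cos(..) - B sin(..)); for A <= 1 the factor y^(A-1)
   is largest at the left end point. *)
Lemma oscillating_power_lipschitz (A B phi x h : R) : A <= 1 -> 0 < x -> 0 < h ->
  Rabs (Rpower (x + h) A * cos (B * ln (x + h) + phi) - Rpower x A * cos (B * ln x + phi))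
  <= (Rabs A + Rabs B) * h * Rpower x (A - 1).
Proof.
  intros HA Hx Hh.
  destruct (MVT_abs (fun y => Rpower y A * cos (B * ln y + phi))
              (fun y => Rpower y (A - 1) * (A * cos (B * ln y + phi) - B * sin (B * ln y + phi)))
              x (x + h)) as [c [Heq Hc]].
  - intros c Hc; rewrite Rmin_left, Rmax_right in Hc by lra.
    apply is_derive_Reals; unfold Rpower; auto_derive; [lra|].
    replace ((A - 1) * ln c) with (A * ln c + - ln c) by ring.
    rewrite exp_plus, exp_Ropp, exp_ln by lra; field; lra.
  - rewrite Rmin_left, Rmax_right in Hc by lra.
    rewrite Heq, Rabs_mult, (Rabs_pos_eq (Rpower c _)) by (apply Rlt_le, Rpower_pos).
    replace (x + h - x) with h by ring; rewrite (Rabs_pos_eq h) by lra.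
    replace (A - 1) with (- (1 - A)) by ring.
    pose proof (Rpower_opp_antitone (1 - A) x c ltac:(lra) ltac:(lra)).
    pose proof (trig_combination_bound A B (B * ln c + phi)).
    pose proof (Rpower_pos c (- (1 - A))).
    replace ((Rabs A + Rabs B) * h * Rpower x (- (1 - A)))
      with (Rpower x (- (1 - A)) * (Rabs A + Rabs B) * h) by ring.
    apply Rmult_le_compat_r; [lra|apply Rmult_le_compat; [lra|apply Rabs_pos|lra|lra]].
Qed.

(* The imaginary part of x^-s is a phase-shifted real part. *)
Lemma sin_as_cos (u : R) : sin u = cos (u + - (PI / 2)).
Proof.
  rewrite <- cos_shift, <- cos_neg; f_equal; ring.
Qed.

Lemma cpow_pos_diff_bound (s : C) (x h : R) : -1 <= Re s -> 0 < x -> 0 < h ->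
  Rabs (Re (Cminus (cpow_pos x (Copp s)) (cpow_pos (x + h) (Copp s))))
    <= (Rabs (Re s) + Rabs (Im s)) * h * Rpower x (- (Re s + 1)) /\
  Rabs (Im (Cminus (cpow_pos x (Copp s)) (cpow_pos (x + h) (Copp s))))
    <= (Rabs (Re s) + Rabs (Im s)) * h * Rpower x (- (Re s + 1)).
Proof.
  intros Hs Hx Hh.
  replace (Rabs (Re s) + Rabs (Im s)) with (Rabs (- Re s) + Rabs (- Im s)) by (rewrite !Rabs_Ropp; ring).
  replace (- (Re s + 1)) with (- Re s - 1) by ring.
  change (Re (Cminus ?p ?q)) with (Re p - Re q); change (Im (Cminus ?p ?q)) with (Im p - Im q).
  change (Re (cpow_pos ?y (Copp s))) with (Rpower y (- Re s) * cos (- Im s * ln y)).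
  change (Im (cpow_pos ?y (Copp s))) with (Rpower y (- Re s) * sin (- Im s * ln y)).
  split; rewrite Rabs_minus_sym.
  - rewrite <- (Rplus_0_r (- Im s * ln x)), <- (Rplus_0_r (- Im s * ln (x + h))).
    apply oscillating_power_lipschitz; lra.
  - rewrite !sin_as_cos; apply oscillating_power_lipschitz; lra.
Qed.

Lemma INR_S_mult_pos (k : nat) (a : R) : 0 < a -> 0 < INR (S k) * a.
Proof. intros Ha; apply Rmult_lt_0_compat; [apply lt_0_INR; lia|exact Ha]. Qed.

Lemma hurwitz_zeta_series (s : C) (al : R) : 1 < Re s -> 0 < al ->
  is_series (fun n => cpow_pos (INR n + al) (Copp s)) (hurwitz_zeta s al).
Proof.
  intros Hs Hal; pose proof (ex_series_Rpower_shift _ _ Hs Hal) as Hmaj.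
  apply is_series_C; split; apply Series_correct.
  - exact (ex_series_Rabs_le _ _ (fun n => proj1 (cpow_pos_bound _ s)) Hmaj).
  - exact (ex_series_Rabs_le _ _ (fun n => proj2 (cpow_pos_bound _ s)) Hmaj).
Qed.

Lemma hurwitz_zeta_bound (s : C) (al : R) : 1 < Re s -> 0 < al ->
  Rabs (Re (hurwitz_zeta s al)) <= Series (fun n => Rpower (INR n + al) (- Re s)) /\
  Rabs (Im (hurwitz_zeta s al)) <= Series (fun n => Rpower (INR n + al) (- Re s)).
Proof.
  intros Hs Hal; pose proof (ex_series_Rpower_shift _ _ Hs Hal) as Hmaj.
  destruct (proj1 (is_series_C _ _) (hurwitz_zeta_series s al Hs Hal)) as [Hre Him].
  split; eapply is_series_Rabs_le; eauto; intros n; apply cpow_pos_bound.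
Qed.

Lemma series_tail_vanishes (v : nat -> R) :
  ex_series v -> is_lim_seq (fun k => Series (fun n => v (k + n)%nat)) 0.
Proof.
  intros Hv; apply is_lim_seq_incr_1.
  apply (is_lim_seq_ext (fun k => Series v - sum_n v k)).
  - intros k; rewrite (Series_incr_n v (S k)) by (auto; lia); simpl; rewrite sum_n_Reals; ring.
  - replace (Finite 0) with (Finite (Series v - Series v)) by (f_equal; ring).
    apply is_lim_seq_minus'; [apply is_lim_seq_const|apply Series_correct, Hv].
Qed.

(* zeta(s, (k+1) a) tends to 0 as k -> oo: it is dominated by a multiple of
   the k-th tail of the convergent series sum (m+1)^-Re(s). *)
Lemma hurwitz_zeta_vanishes (s : C) (a : R) : 1 < Re s -> 0 < a ->
  is_lim_seq (fun k => Re (hurwitz_zeta s (INR (S k) * a))) 0 /\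
  is_lim_seq (fun k => Im (hurwitz_zeta s (INR (S k) * a))) 0.
Proof.
  intros Hs Ha.
  set (kappa := Rpower (Rmin a 1) (- Re s)); set (v := fun m : nat => Rpower (INR m + 1) (- Re s)).
  assert (Hv : ex_series v) by (apply ex_series_Rpower; lra).
  assert (Hdom : forall k, Series (fun n => Rpower (INR n + INR (S k) * a) (- Re s))
                           <= kappa * Series (fun n => v (k + n)%nat)).
  { intros k; rewrite <- Series_scal_l.
    apply Series_le; [|exact (ex_series_scal _ _ (proj1 (ex_series_incr_n v k) Hv))].
    intros n; split; [apply Rlt_le, Rpower_pos|].
    replace (v (k + n)%nat) with (Rpower (INR n + INR (S k)) (- Re s))
      by (unfold v; f_equal; rewrite plus_INR, S_INR; ring).
    apply Rpower_scale_le; [lra|lra|apply pos_INR|apply lt_0_INR; lia]. }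
  assert (Hlim : is_lim_seq (fun k => kappa * Series (fun n => v (k + n)%nat)) 0).
  { replace (Finite 0) with (Rbar_mult kappa 0) by (simpl; f_equal; ring).
    apply is_lim_seq_scal_l, series_tail_vanishes, Hv. }
  assert (Hsqueeze : forall z : nat -> R,
             (forall k, Rabs (z k) <= Series (fun n => Rpower (INR n + INR (S k) * a) (- Re s))) ->
             is_lim_seq z 0).
  { intros z Hz; apply is_lim_seq_abs_0.
    apply (is_lim_seq_le_le (fun _ => 0) (fun k => Rabs (z k)) (fun k => kappa * Series (fun n => v (k + n)%nat))); [|apply is_lim_seq_const|exact Hlim].
    intros k; split; [apply Rabs_pos|eapply Rle_trans; [apply Hz|apply Hdom]]. }
  split; apply Hsqueeze; intros k; apply (hurwitz_zeta_bound s _ Hs (INR_S_mult_pos k a Ha)).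
Qed.

Lemma sum_n_pairs (g : nat -> R) (j : nat) :
  sum_n g (S (2 * j)) = sum_n (fun i => g (2 * i)%nat + g (S (2 * i))) j.
Proof.
  induction j as [|j IH]; [simpl; rewrite sum_Sn, !sum_O; reflexivity|].
  replace (S (2 * S j)) with (S (S (S (2 * j)))) by lia.
  rewrite sum_Sn, sum_Sn, IH, sum_Sn; repeat change (plus ?x ?y) with (x + y).
  replace (2 * S j)%nat with (S (S (2 * j))) by lia; apply Rplus_assoc.
Qed.

Lemma is_lim_seq_even_odd (u : nat -> R) (l : R) :
  is_lim_seq (fun j => u (2 * j)%nat) l -> is_lim_seq (fun j => u (S (2 * j))) l ->
  is_lim_seq u l.
Proof.
  intros Hev Hodd; apply is_lim_seq_spec in Hev, Hodd; apply is_lim_seq_spec.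
  intros eps; destruct (Hev eps) as [N1 H1]; destruct (Hodd eps) as [N2 H2].
  exists (2 * (N1 + N2))%nat; intros n Hn.
  destruct (Nat.Even_or_Odd n) as [[j Hj]|[j Hj]]; subst n.
  - apply H1; lia.
  - replace (2 * j + 1)%nat with (S (2 * j)) by lia; apply H2; lia.
Qed.

Lemma is_series_pairs (g : nat -> R) (L : R) :
  is_lim_seq g 0 -> is_series (fun j => g (2 * j)%nat + g (S (2 * j))) L -> is_series g L.
Proof.
  intros Hg HL.
  assert (Hodd : is_lim_seq (fun j => sum_n g (S (2 * j))) L).
  { apply (is_lim_seq_ext (sum_n (fun j => g (2 * j)%nat + g (S (2 * j))))); [|exact HL].
    intros j; symmetry; apply sum_n_pairs. }
  apply (is_lim_seq_even_odd (sum_n g)); [|exact Hodd].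
  apply (is_lim_seq_ext (fun j => sum_n g (S (2 * j)) - g (S (2 * j)))).
  - intros j; rewrite sum_Sn; change (plus ?x ?y) with (x + y); ring.
  - replace L with (L - 0) by ring; apply is_lim_seq_minus'; [exact Hodd|].
    apply (is_lim_seq_subseq g 0 (fun j => S (2 * j))); [|exact Hg].
    apply eventually_subseq; intros n; lia.
Qed.

Lemma is_series_alternating_pairs (g : nat -> C) (L : C) :
  is_lim_seq (fun k => Re (g k)) 0 -> is_lim_seq (fun k => Im (g k)) 0 ->
  is_series (fun j => Cminus (g (2 * j)%nat) (g (S (2 * j)))) L ->
  is_series (fun k => Cmult (RtoC ((-1) ^ k)) (g k)) L.
Proof.
  intros Hre Him HL; apply is_series_C in HL as [HL1 HL2]; apply is_series_C.
  assert (Hsign : forall (x : nat -> R), is_lim_seq x 0 -> is_lim_seq (fun k => (-1) ^ k * x k) 0).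
  { intros x Hx; apply is_lim_seq_abs_0; apply is_lim_seq_abs_0 in Hx.
    refine (is_lim_seq_ext _ _ _ _ Hx); intros k; rewrite Rabs_mult, pow_1_abs; ring. }
  simpl; split; apply is_series_pairs.
  - apply (is_lim_seq_ext (fun k => (-1) ^ k * Re (g k))); [intros k; unfold Re; ring|].
    apply Hsign, Hre.
  - refine (is_series_ext _ _ _ _ HL1); intros j; rewrite pow_1_even, pow_1_odd; unfold Re; simpl; ring.
  - apply (is_lim_seq_ext (fun k => (-1) ^ k * Im (g k))); [intros k; unfold Im; ring|].
    apply Hsign, Him.
  - refine (is_series_ext _ _ _ _ HL2); intros j; rewrite pow_1_even, pow_1_odd; unfold Im; simpl; ring.
Qed.

Lemma hurwitz_zeta_rescaled (s : C) (c al : R) : 1 < Re s -> 0 < c -> 0 < al ->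
  is_series (fun k => cpow_pos (c * (INR k + al)) (Copp s))
            (Cmult (cpow_pos c (Copp s)) (hurwitz_zeta s al)).
Proof.
  intros Hs Hc Hal.
  apply (is_series_ext (fun k => scal (cpow_pos c (Copp s)) (cpow_pos (INR k + al) (Copp s)))).
  - intros k; apply cpow_pos_mult; [exact Hc|pose proof (pos_INR k); lra].
  - exact (is_series_scal _ _ _ (hurwitz_zeta_series s al Hs Hal)).
Qed.

Lemma sum_hurwitz_zeta_multiples (a : R) (s : C) : 0 < a -> 2 < Re s ->
  exists M : C,
    is_series (fun n => hurwitz_zeta s (INR n / a + 1)) M /\
    is_series (fun k => hurwitz_zeta s (INR (S k) * a)) (Cmult (cpow_pos a (Copp s)) M).
Proof.
  intros Ha Hs.
  destruct (ex_double_series_Rpower (Re s) a Hs Ha) as [Hrows Hsum].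
  destruct (dominated_fubini_C (fun k n => cpow_pos (INR n + INR (S k) * a) (Copp s))
              (fun k n => Rpower (INR n + INR (S k) * a) (- Re s))
              (fun k => hurwitz_zeta s (INR (S k) * a))
              (fun n => Cmult (cpow_pos a (Copp s)) (hurwitz_zeta s (INR n / a + 1))))
    as [L [Hrow Hcol]]; auto.
  - intros k n; apply cpow_pos_bound.
  - intros k; apply hurwitz_zeta_series; [lra|apply INR_S_mult_pos, Ha].
  - intros n; pose proof (pos_INR n).
    refine (is_series_ext _ _ _ _ (hurwitz_zeta_rescaled s a (INR n / a + 1) ltac:(lra) Ha _)).
    + intros k; f_equal; rewrite S_INR; field; lra.
    + assert (0 <= INR n / a) by (apply Rdiv_le_0_compat; lra); lra.
  - destruct (is_series_Cmult_cancel _ _ _ _ (cpow_pos_opp a s) Hcol) as [HM HL].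
    exists (Cmult (cpow_pos a s) L); split; [exact HM|rewrite <- HL; exact Hrow].
Qed.

Definition paired_difference (s : C) (a : R) (j n : nat) : C :=
  Cminus (cpow_pos (INR n + INR (S (2 * j)) * a) (Copp s))
         (cpow_pos (INR n + INR (S (S (2 * j))) * a) (Copp s)).

Lemma paired_difference_bound (s : C) (a : R) (j n : nat) : 0 < a -> 1 < Re s ->
  Rabs (Re (paired_difference s a j n))
    <= (Rabs (Re s) + Rabs (Im s)) * a * Rpower (INR n + INR (S j) * a) (- (Re s + 1)) /\
  Rabs (Im (paired_difference s a j n))
    <= (Rabs (Re s) + Rabs (Im s)) * a * Rpower (INR n + INR (S j) * a) (- (Re s + 1)).
Proof.
  intros Ha Hs; unfold paired_difference; set (x := INR n + INR (S (2 * j)) * a).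
  pose proof (pos_INR n); pose proof (pos_INR j).
  assert (Hx : INR n + INR (S j) * a <= x) by (unfold x; rewrite !S_INR, mult_INR; simpl; nra).
  assert (Hx0 : 0 < INR n + INR (S j) * a) by (pose proof (INR_S_mult_pos j a Ha); lra).
  replace (INR n + INR (S (S (2 * j))) * a) with (x + a) by (unfold x; rewrite (S_INR (S _)); ring).
  pose proof (Rpower_opp_antitone (Re s + 1) _ _ ltac:(lra) (conj Hx0 Hx)) as Hmono.
  assert (HK : 0 <= (Rabs (Re s) + Rabs (Im s)) * a)
    by (pose proof (Rabs_pos (Re s)); pose proof (Rabs_pos (Im s)); nra).
  destruct (cpow_pos_diff_bound s x a ltac:(lra) ltac:(lra) Ha) as [Hre Him].
  split; [apply (Rle_trans _ _ _ Hre)|apply (Rle_trans _ _ _ Him)];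
    apply Rmult_le_compat_l; [exact HK|exact Hmono|exact HK|exact Hmono].
Qed.

(* The n-th column of paired differences sums to
   (2a)^-s (zeta(s, n/(2a) + 1/2) - zeta(s, n/(2a) + 1)), since
   n + (2j+1) a = 2a (j + n/(2a) + 1/2) and n + (2j+2) a = 2a (j + n/(2a) + 1). *)
Lemma paired_difference_column (s : C) (a : R) (n : nat) : 0 < a -> 1 < Re s ->
  is_series (fun j => paired_difference s a j n)
            (Cmult (cpow_pos (2 * a) (Copp s))
                   (Cminus (hurwitz_zeta s (INR n / (2 * a) + / 2))
                           (hurwitz_zeta s (INR n / (2 * a) + 1)))).
Proof.
  intros Ha Hs; pose proof (pos_INR n).
  assert (0 <= INR n / (2 * a)) by (apply Rdiv_le_0_compat; lra).
  replace (Cmult _ (Cminus _ _)) with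
    (Cminus (Cmult (cpow_pos (2 * a) (Copp s)) (hurwitz_zeta s (INR n / (2 * a) + / 2)))
            (Cmult (cpow_pos (2 * a) (Copp s)) (hurwitz_zeta s (INR n / (2 * a) + 1)))) by ring.
  refine (is_series_ext _ _ _ _ (is_series_minus _ _ _ _
            (hurwitz_zeta_rescaled s (2 * a) (INR n / (2 * a) + / 2) ltac:(lra) ltac:(lra) ltac:(lra))
            (hurwitz_zeta_rescaled s (2 * a) (INR n / (2 * a) + 1) ltac:(lra) ltac:(lra) ltac:(lra)))).
  intros j; change (Cminus (cpow_pos (2 * a * (INR j + (INR n / (2 * a) + / 2))) (Copp s))
                           (cpow_pos (2 * a * (INR j + (INR n / (2 * a) + 1))) (Copp s))
                    = paired_difference s a j n).
  unfold paired_difference; rewrite !S_INR, mult_INR; f_equal; f_equal; simpl; field; lra.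
Qed.

Lemma alternating_sum_hurwitz_zeta_multiples (a : R) (s : C) : 0 < a -> 1 < Re s ->
  exists M : C,
    is_series (fun n => Cminus (hurwitz_zeta s (INR n / (2 * a) + / 2))
                               (hurwitz_zeta s (INR n / (2 * a) + 1))) M /\
    is_series (fun k => Cmult (RtoC ((-1) ^ k)) (hurwitz_zeta s (INR (S k) * a)))
              (Cmult (cpow_pos (2 * a) (Copp s)) M).
Proof.
  intros Ha Hs; set (K := (Rabs (Re s) + Rabs (Im s)) * a).
  destruct (ex_double_series_Rpower (Re s + 1) a ltac:(lra) Ha) as [Hrows Hsum].
  destruct (dominated_fubini_C (paired_difference s a)
              (fun j n => K * Rpower (INR n + INR (S j) * a) (- (Re s + 1)))
              (fun j => Cminus (hurwitz_zeta s (INR (S (2 * j)) * a))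
                               (hurwitz_zeta s (INR (S (S (2 * j))) * a)))
              (fun n => Cmult (cpow_pos (2 * a) (Copp s))
                              (Cminus (hurwitz_zeta s (INR n / (2 * a) + / 2))
                                      (hurwitz_zeta s (INR n / (2 * a) + 1)))))
    as [L [Hrow Hcol]].
  - intros j n; exact (paired_difference_bound s a j n Ha Hs).
  - intros j; exact (ex_series_scal _ _ (Hrows j)).
  - apply (ex_series_ext (fun j => K * Series (fun n => Rpower (INR n + INR (S j) * a) (- (Re s + 1))))).
    + intros j; symmetry; apply Series_scal_l.
    + exact (ex_series_scal _ _ Hsum).
  - intros j; exact (is_series_minus _ _ _ _
      (hurwitz_zeta_series s _ ltac:(lra) (INR_S_mult_pos (2 * j) a Ha))
      (hurwitz_zeta_series s _ ltac:(lra) (INR_S_mult_pos (S (2 * j)) a Ha))).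
  - intros n; exact (paired_difference_column s a n Ha Hs).
  - destruct (is_series_Cmult_cancel _ _ _ _ (cpow_pos_opp (2 * a) s) Hcol) as [HM HL].
    exists (Cmult (cpow_pos (2 * a) s) L); split; [exact HM|rewrite <- HL].
    destruct (hurwitz_zeta_vanishes s a Hs Ha) as [Hre Him].
    exact (is_series_alternating_pairs (fun k => hurwitz_zeta s (INR (S k) * a)) L Hre Him Hrow).
Qed.

Theorem mainTheorem14 (a : R) (ha : 0 < a) :
  (forall s : C, 2 < Re s ->
     exists M : C,
       is_series (fun n : nat => hurwitz_zeta s (INR n / a + 1)) M /\
       is_series (fun k : nat => hurwitz_zeta s (INR (S k) * a))
                 (Cmult (cpow_pos a (Copp s)) M)) /\
  (forall s : C, 1 < Re s ->
     exists M : C,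
       is_series (fun n : nat =>
                    Cminus (hurwitz_zeta s (INR n / (2 * a) + / 2))
                           (hurwitz_zeta s (INR n / (2 * a) + 1))) M /\
       is_series (fun k : nat =>
                    Cmult (RtoC ((-1) ^ k)) (hurwitz_zeta s (INR (S k) * a)))
                 (Cmult (cpow_pos (2 * a) (Copp s)) M)).
Proof.
  split; intros s Hs.
  - exact (sum_hurwitz_zeta_multiples a s ha Hs).
  - exact (alternating_sum_hurwitz_zeta_multiples a s ha Hs).
Qed.
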